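(* Let $G=(V=[n],E,(p_{uv})_{(u,v)\in E})$ be an influence graph, $k\in\{2,\dots,n\}$, $\pi$ an optimal adaptive policy with $|\pi|=k$, and $x_v$ the probability that node $v$ is selected by $\pi$. Then for every $S\subseteq V$, $$\mathbb{E}_{\mathbf L,\hat{\mathbf L}}\big[\sigma_{\mathbf L^2(dom(\hat\Psi_\pi)\cup S)}(dom(\hat\Psi_\pi)\cup S)\big]\le\sigma^2(S)+\sum_{v\in V\setminus S}x_v\,\Delta^2_S(v).$$
   Context: $G$ is a directed graph with activation probabilities $p_{uv}\in[0,1]$. $\mathbf L,\hat{\mathbf L}$ are independent random subsets of $E$, each containing every edge $(u,v)$ independently with probability $p_{uv}$. For $L\subseteq E$, $T\subseteq V$, $\sigma_L(T)$ is the number of nodes reachable by a directed path (length $\ge0$) in $(V,L)$ from $T$; $\sigma(T):=\mathbb{E}[\sigma_{\mathbf L}(T)]$. For $T\subseteq V$, $\mathbf L^2(T):=\mathbf L\cup(\hat{\mathbf L}\cap\{(u,w)\in E:u\in T\})$, $\sigma^2(T):=\mathbb{E}[\sigma_{\mathbf L^2(T)}(T)]$, and $\Delta^2_S(v):=\mathbb{E}[\sigma_{\mathbf L^2(\{v\})}(S\cup\{v\})-\sigma_{\mathbf L}(S)]$. Realisations: $\Phi(v):=\{v\}\cup\{z:(v,z)\in\mathbf L\}$ and $\hat\Phi(v):=\{v\}\cup\{z:(v,z)\in\hat{\mathbf L}\}$; a partial realisation is the restriction of $v\mapsto\{v\}\cup\{z:(v,z)\in L\}$ (for some $L\subseteq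 E$) to a subset $dom(\psi)$ of $V$. An adaptive policy $\pi$ maps partial realisations to a node or STOP; it is run from $\psi=\emptyset$, and while $\pi(\psi)=v\ne$ STOP it sets $\psi\leftarrow\psi\cup\{(v,\Phi(v))\}$, ending with $\Psi_\pi$; $\sigma(\pi):=\mathbb{E}[\sigma_{\mathbf L}(dom(\Psi_\pi))]$; $|\pi|=k$ means $|dom(\Psi_\pi)|=k$ always; $\pi$ is optimal if it maximizes $\sigma(\pi)$ among policies with $|\pi|=k$. $\hat\Psi_\pi$ denotes the final partial realisation when $\pi$ is run with feedback $\hat\Phi(v)$ instead of $\Phi(v)$. *)

From mathcomp Require Import all_boot all_order all_algebra.
Set Implicit Arguments. Unset Strict Implicit. Unset Printing Implicit Defensive.
Import Order.TTheory GRing.Theory Num.Theory.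
Local Open Scope ring_scope.

Definition edgeset (n : nat) := {set ('I_n * 'I_n)}.

Definition reach n (L : edgeset n) (T : {set 'I_n}) : {set 'I_n} :=
  [set v | [exists t in T, connect (fun a b => (a, b) \in L) t v]].

Definition sigmaL n (L : edgeset n) (T : {set 'I_n}) : nat := #|reach L T|.

Definition L2 n (E L Lh : edgeset n) (T : {set 'I_n}) : edgeset n :=
  L :|: (Lh :&: [set e in E | e.1 \in T]).

Definition prL (R : realFieldType) n (E : edgeset n) (p : 'I_n -> 'I_n -> R)
  (L : edgeset n) : R :=
  if L \subset E then
    \prod_(e in E) (if e \in L then p e.1 e.2 else 1 - p e.1 e.2)
  else 0.

Definition Exp1 (R : realFieldType) n (E : edgeset n) (p : 'I_n -> 'I_n -> R)
  (f : edgeset n -> R) : R :=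
  \sum_(L : edgeset n) prL E p L * f L.

Definition Exp2 (R : realFieldType) n (E : edgeset n) (p : 'I_n -> 'I_n -> R)
  (f : edgeset n -> edgeset n -> R) : R :=
  \sum_(L : edgeset n) \sum_(Lh : edgeset n) prL E p L * prL E p Lh * f L Lh.

Definition sigma (R : realFieldType) n (E : edgeset n) (p : 'I_n -> 'I_n -> R)
  (T : {set 'I_n}) : R := Exp1 E p (fun L => (sigmaL L T)%:R).

Definition sigma2 (R : realFieldType) n (E : edgeset n) (p : 'I_n -> 'I_n -> R)
  (T : {set 'I_n}) : R := Exp2 E p (fun L Lh => (sigmaL (L2 E L Lh T) T)%:R).

Definition Delta2 (R : realFieldType) n (E : edgeset n) (p : 'I_n -> 'I_n -> R)
  (S : {set 'I_n}) (v : 'I_n) : R :=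
  Exp2 E p (fun L Lh =>
    (sigmaL (L2 E L Lh [set v]) (v |: S))%:R - (sigmaL L S)%:R).

Definition Phi n (L : edgeset n) (v : 'I_n) : {set 'I_n} :=
  v |: [set z | (v, z) \in L].

(* Partial realisations: None = outside the domain. *)
Definition PR (n : nat) := {ffun 'I_n -> option {set 'I_n}}.

Definition dom n (psi : PR n) : {set 'I_n} := [set v | psi v != None].

(* Adaptive policy: None = STOP. *)
Definition policy (n : nat) := PR n -> option 'I_n.

Definition pstep n (pi : policy n) (L : edgeset n) (psi : PR n) : PR n :=
  match pi psi with
  | None => psi
  | Some v => [ffun u => if u == v then Some (Phi L v) else psi u]
  end.

(* A productive step enlarges the domain, a step
   selecting an already observed node leaves psi unchanged (so the run
   never terminates); hence the run terminates iff pi (Psi pi L) = None,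
   and then Psi pi L is the final partial realisation. *)
Definition Psi n (pi : policy n) (L : edgeset n) : PR n :=
  iter n (pstep pi L) [ffun _ => None].

Definition has_size n (E : edgeset n) (pi : policy n) (k : nat) : Prop :=
  forall L : edgeset n, L \subset E ->
    pi (Psi pi L) = None /\ #|dom (Psi pi L)| = k.

Definition sigma_pol (R : realFieldType) n (E : edgeset n)
  (p : 'I_n -> 'I_n -> R) (pi : policy n) : R :=
  Exp1 E p (fun L => (sigmaL L (dom (Psi pi L)))%:R).

Definition xsel (R : realFieldType) n (E : edgeset n)
  (p : 'I_n -> 'I_n -> R) (pi : policy n) (v : 'I_n) : R :=
  Exp1 E p (fun L => (v \in dom (Psi pi L))%:R).

From mathcomp Require Import all_boot all_order all_algebra.
Import Order.TTheory GRing.Theory Num.Theory.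
Set Implicit Arguments. Unset Strict Implicit. Unset Printing Implicit Defensive.

(* A node reached from T :|: S in L^2(T :|: S) is already reached
   from a single seed w in L^2({w}), since an Lh-edge used along the path can
   serve as the start of a fresh path from its tail. Seeds in S stay inside
   sigma_{L^2(S)}(S), and a seed v outside S adds at most
   sigma_{L^2({v})}(v |: S) - sigma_L(S) new nodes. Taking expectations with
   T = dom(Psi pi Lh), the event [v \in T] depends only on the edges of Lh not
   leaving v (the run is identical until v is selected), whereas the increment
   only sees the edges of Lh leaving v; by independence of the edges the
   expectation factors as x_v * Delta^2_S(v). *)

Lemma connect_ind (T : finType) (e : rel T) (P : T -> Prop) x y :
  P x -> (forall a b, P a -> e a b -> P b) -> connect e x y -> P y.
Proof.
move=> Px eP /connectP[s]; elim: s x Px => [|z s IHs] x Px /=; first by move=> _ ->.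
by case/andP=> exz zs; apply: IHs (eP _ _ Px exz) zs.
Qed.

Lemma leq_card_bigcup (I T : finType) (P : pred I) (F : I -> {set T}) :
  #|\bigcup_(i | P i) F i| <= \sum_(i | P i) #|F i|.
Proof.
apply: (big_ind2 (fun (A : {set T}) m => #|A| <= m)) => [|A m B l leAm leBl|//].
  by rewrite cards0.
by apply: (leq_trans (leq_card_setU A B)); apply: leq_add.
Qed.

Lemma leq_card_setU_bigcup (I T : finType) (P : pred I) (A D : {set T})
    (C : I -> {set T}) :
  D \subset A -> (forall i, P i -> D \subset C i) ->
  #|A :|: \bigcup_(i | P i) C i| <= #|A| + \sum_(i | P i) (#|C i| - #|D|).
Proof.
move=> sDA sDC.
have -> : A :|: \bigcup_(i | P i) C i = A :|: \bigcup_(i | P i) (C i :\: D).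
  apply/setP => x; rewrite !inE; case: (boolP (x \in A)) => //= xA.
  have xD : x \notin D by apply: contra xA; apply: (subsetP sDA).
  apply/bigcupP/bigcupP => -[i Pi xC]; exists i => //; first by rewrite inE xD.
  by case/setDP: xC.
apply: (leq_trans (leq_card_setU _ _)); rewrite leq_add2l.
apply: leq_trans (leq_card_bigcup _ _) _; apply: leq_sum => i Pi.
by rewrite cardsD (setIidPr (sDC i Pi)).
Qed.

Section Reachability.
Variables (n : nat) (E L Lh : edgeset n).
Implicit Types (T S : {set 'I_n}).

Lemma reachS (K K' : edgeset n) T1 T2 :
  K \subset K' -> T1 \subset T2 -> reach K T1 \subset reach K' T2.
Proof.
move=> sL sT; apply/subsetP => x; rewrite !inE => /existsP[t /andP[tT ct]].
apply/existsP; exists t; rewrite (subsetP sT) //=.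
by apply: connect_sub ct => a b ab; apply/connect1/(subsetP sL).
Qed.

Lemma sub_L2 T : L \subset L2 E L Lh T.
Proof. exact: subsetUl. Qed.

Lemma L2S T1 T2 : T1 \subset T2 -> L2 E L Lh T1 \subset L2 E L Lh T2.
Proof.
move=> sT; apply/setUS/setIS/subsetP => e; rewrite !inE => /andP[-> /=].
exact: (subsetP sT).
Qed.

Lemma reach_L2_seeds T :
  reach (L2 E L Lh T) T \subset \bigcup_(w in T) reach (L2 E L Lh [set w]) [set w].
Proof.
apply/subsetP => x; rewrite inE => /existsP[t /andP[tT ctx]].
pose seeded y :=
  exists2 w, w \in T & connect (fun a b => (a, b) \in L2 E L Lh [set w]) w y.
have [w wT cwx] : seeded x.
  apply: (connect_ind (P := seeded)) ctx; first by exists t; rewrite ?connect0.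
  move=> a b [w wT cwa]; rewrite !inE => /orP[abL | /and3P[abLh abE aT]].
    exists w => //; apply: connect_trans cwa (connect1 _).
    by rewrite (subsetP (sub_L2 _)).
  by exists a => //; apply: connect1; rewrite !inE abLh abE eqxx orbT.
by apply/bigcupP; exists w; rewrite // inE; apply/existsP; exists w; rewrite inE eqxx.
Qed.

Lemma sigmaL_L2_setU_le T S :
  sigmaL (L2 E L Lh (T :|: S)) (T :|: S) <=
  sigmaL (L2 E L Lh S) S +
  \sum_(v in T :\: S) (sigmaL (L2 E L Lh [set v]) (v |: S) - sigmaL L S).
Proof.
have sub : reach (L2 E L Lh (T :|: S)) (T :|: S) \subset
    reach (L2 E L Lh S) S :|: \bigcup_(v in T :\: S) reach (L2 E L Lh [set v]) (v |: S).
  apply: subset_trans (reach_L2_seeds _) _; apply/bigcupsP => w wTS.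
  have w1 : [set w] \subset w |: S by rewrite sub1set setU11.
  case: (boolP (w \in S)) => wS.
    by apply/subsetU/orP; left; apply: reachS (L2S _) _; rewrite sub1set.
  apply/subsetU/orP; right; apply: (bigcup_max w); last exact: reachS (subxx _) w1.
  by move: wTS; rewrite !inE (negbTE wS) orbF => ->.
apply: leq_trans (subset_leq_card sub) (leq_card_setU_bigcup _ _).
  exact: reachS (sub_L2 _) (subxx _).
by move=> v _; apply: reachS (sub_L2 _) (subsetUr _ _).
Qed.

Lemma L2_setI_out T : L2 E L (Lh :&: [set e | e.1 \in T]) T = L2 E L Lh T.
Proof.
rewrite /L2; congr (_ :|: _); apply/setP => e; rewrite !inE.
by case: (e.1 \in T); rewrite ?andbT ?andbF.
Qed.

End Reachability.

Section Policy.
Variables (n : nat) (pi : policy n).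

Lemma mem_dom_pstep L psi u : u \in dom psi -> u \in dom (pstep pi L psi).
Proof. by rewrite /pstep; case: (pi psi) => // w; rewrite !inE ffunE; case: (u == w). Qed.

Variables (L L' : edgeset n) (v : 'I_n).
Hypothesis agree : forall u z, u != v -> ((u, z) \in L) = ((u, z) \in L').

Local Notation run L m := (iter m (pstep pi L) [ffun _ => None]).

Lemma Phi_agree u : u != v -> Phi L u = Phi L' u.
Proof. by move=> uv; congr (_ |: _); apply/setP => z; rewrite !inE agree. Qed.

Lemma iter_pstep_agree m :
  (v \in dom (run L m)) = (v \in dom (run L' m)) /\
  (v \notin dom (run L m) -> run L m = run L' m).
Proof.
elim: m => [|m [IHdom IHrun]] //=.
have [vL | vNL] := boolP (v \in dom (run L m)).
  by rewrite !mem_dom_pstep -?IHdom.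
rewrite -(IHrun vNL) /pstep; case: (pi _) => [u|//].
have [-> | uv] := eqVneq u v; first by rewrite !inE !ffunE eqxx.
by rewrite Phi_agree.
Qed.

Lemma mem_dom_Psi_agree : (v \in dom (Psi pi L)) = (v \in dom (Psi pi L')).
Proof. exact: (iter_pstep_agree n).1. Qed.

End Policy.

Local Open Scope ring_scope.

Lemma sum_mul_setD_setI (R : pzSemiRingType) (T : finType) (O : {set T})
    (F G : {set T} -> R) :
  (forall A : {set T}, ~~ [disjoint A & O] -> F A = 0) ->
  (forall B : {set T}, ~~ (B \subset O) -> G B = 0) ->
  \sum_(L : {set T}) F (L :\: O) * G (L :&: O) = (\sum_A F A) * (\sum_B G B).
Proof.
move=> F0 G0; rewrite big_distrlr /= pair_big /=.
rewrite (partition_big (fun AB : {set T} * {set T} => AB.1 :|: AB.2) predT) //=.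
apply: eq_bigr => L _; rewrite (bigD1 (L :\: O, L :&: O)) /=; last first.
  by rewrite setUC setID eqxx.
rewrite big1 ?addr0 // => -[A B] /= /andP[/eqP defL neqAB].
have [dAO | /F0 ->] := boolP [disjoint A & O]; last by rewrite mul0r.
have [sBO | /G0 ->] := boolP (B \subset O); last by rewrite mulr0.
case/eqP: neqAB; rewrite -defL setDUl setIUl (setDidPl dAO) (disjoint_setI0 dAO).
have /eqP-> : B :\: O == set0 by rewrite setD_eq0.
by rewrite (setIidPl sBO) setU0 set0U.
Qed.

Section Expectation.
Variables (R : realFieldType) (n : nat) (p : 'I_n -> 'I_n -> R).
Implicit Types (E O L A B : edgeset n).

Lemma prL_split E O L :
  prL E p L = prL (E :\: O) p (L :\: O) * prL (E :&: O) p (L :&: O).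
Proof.
rewrite /prL.
have -> : (L \subset E) = (L :\: O \subset E :\: O) && (L :&: O \subset E :&: O).
  apply/idP/andP => [sLE | [sLED sLEI]]; first by rewrite setSD ?setSI.
  apply/subsetP => e eL; have [eO | eNO] := boolP (e \in O).
    by have /(subsetP sLEI)/setIP[] : e \in L :&: O by rewrite inE eL eO.
  by have /(subsetP sLED)/setDP[] : e \in L :\: O by rewrite inE eNO eL.
case: (L :\: O \subset E :\: O); case: (L :&: O \subset E :&: O);
  rewrite ?mulr0 ?mul0r //.
rewrite (big_setID O) /= mulrC; congr (_ * _); apply: eq_bigr => e.
  by case/setDP => _ eNO; rewrite inE eNO.
by case/setIP => _ eO; rewrite inE eO andbT.
Qed.

Lemma prL_setD_eq0 E O A : ~~ [disjoint A & O] -> prL (E :\: O) p A = 0.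
Proof.
move=> AO; rewrite /prL ifF //; apply: contraNF AO => sA.
apply/pred0P => e /=; apply/negbTE/andP => -[eA eO].
by move/(subsetP sA): eA; rewrite inE eO.
Qed.

Lemma prL_setI_eq0 E O B : ~~ (B \subset O) -> prL (E :&: O) p B = 0.
Proof.
move=> BO; rewrite /prL ifF //; apply: contraNF BO => sB.
exact: subset_trans sB (subsetIr _ _).
Qed.

(* Edges outside E get the factors 0 (in L) and 1 (not in L), so expanding
   the product of the ones F e + G e yields exactly the prL E p L. *)
Lemma prL_sum E : \sum_L prL E p L = 1.
Proof.
pose F e := if e \in E then p e.1 e.2 else 0.
pose G e := if e \in E then 1 - p e.1 e.2 else 1.
have FG1 e : F e + G e = 1 by rewrite /F /G; case: (e \in E); rewrite ?subrKC ?add0r.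
have := bigA_distr 1 +%R F G; rewrite (eq_bigr _ (fun e _ => FG1 e)) big1_eq.
move=> ->; apply: eq_big => // L _; rewrite /prL.
case: ifPn => [sLE | /subsetPn[e eL eNE]].
  rewrite big_mkcond; apply: eq_bigr => e _; rewrite /F /G.
  have [// | eNE] := boolP (e \in E).
  by rewrite (negbTE (contra (subsetP sLE e) eNE)).
by rewrite (bigD1 e) //= eL /F (negbTE eNE) mul0r.
Qed.

Lemma prL_ge0 E L :
  (forall u v, (u, v) \in E -> 0 <= p u v <= 1) -> 0 <= prL E p L.
Proof.
move=> hp; rewrite /prL; case: ifP => // _; apply: prodr_ge0 => -[u v] /hp /andP[p0 p1].
by case: ifP; rewrite ?subr_ge0.
Qed.

Lemma eq_Exp1 E f g : (forall L, f L = g L) -> Exp1 E p f = Exp1 E p g.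
Proof. by move=> fg; apply: eq_bigr => L _; rewrite fg. Qed.

Lemma Exp1_cst E c : Exp1 E p (fun _ => c) = c.
Proof. by rewrite /Exp1 -big_distrl /= prL_sum mul1r. Qed.

Lemma Exp1D E f g : Exp1 E p (fun L => f L + g L) = Exp1 E p f + Exp1 E p g.
Proof. by rewrite /Exp1 -big_split; apply: eq_bigr => L _; rewrite mulrDr. Qed.

Lemma Exp1_sum E (I : finType) (P : pred I) (F : I -> edgeset n -> R) :
  Exp1 E p (fun L => \sum_(i | P i) F i L) = \sum_(i | P i) Exp1 E p (F i).
Proof. by rewrite /Exp1 exchange_big; apply: eq_bigr => L _; rewrite mulr_sumr. Qed.

Lemma Exp1_scale E c f : Exp1 E p (fun L => c * f L) = c * Exp1 E p f.
Proof. by rewrite /Exp1 mulr_sumr; apply: eq_bigr => L _; rewrite mulrCA. Qed.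

Lemma Exp1_mul_split E O f g :
  (forall L, f L = f (L :\: O)) -> (forall L, g L = g (L :&: O)) ->
  Exp1 E p (fun L => f L * g L) = Exp1 (E :\: O) p f * Exp1 (E :&: O) p g.
Proof.
move=> fO gO; rewrite /Exp1 -(@sum_mul_setD_setI _ _ O)
  => [|A /prL_setD_eq0-> | B /prL_setI_eq0->]; rewrite ?mul0r //.
by apply: eq_bigr => L _; rewrite (prL_split E O) fO gO mulrACA.
Qed.

Lemma Exp1_mul_indep E O f g :
  (forall L, f L = f (L :\: O)) -> (forall L, g L = g (L :&: O)) ->
  Exp1 E p (fun L => f L * g L) = Exp1 E p f * Exp1 E p g.
Proof.
move=> fO gO.
have fE : Exp1 E p f = Exp1 (E :\: O) p f.
  rewrite -[RHS]mulr1 -(Exp1_cst (E :&: O) 1) -(@Exp1_mul_split E O) //.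
  by apply: eq_Exp1 => L; rewrite mulr1.
have gE : Exp1 E p g = Exp1 (E :&: O) p g.
  rewrite -[RHS]mul1r -(Exp1_cst (E :\: O) 1) -(@Exp1_mul_split E O) //.
  by apply: eq_Exp1 => L; rewrite mul1r.
by rewrite (@Exp1_mul_split E O) // fE gE.
Qed.

Lemma Exp2E E f : Exp2 E p f = Exp1 E p (fun L => Exp1 E p (f L)).
Proof.
by apply: eq_bigr => L _; rewrite mulr_sumr; apply: eq_bigr => Lh _; rewrite mulrA.
Qed.

Lemma Exp2D E f g :
  Exp2 E p (fun L Lh => f L Lh + g L Lh) = Exp2 E p f + Exp2 E p g.
Proof. by rewrite !Exp2E -Exp1D; apply: eq_Exp1 => L; apply: Exp1D. Qed.

Lemma Exp2_sum E (I : finType) (P : pred I) (F : I -> edgeset n -> edgeset n -> R) :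
  Exp2 E p (fun L Lh => \sum_(i | P i) F i L Lh) = \sum_(i | P i) Exp2 E p (F i).
Proof.
under [RHS]eq_bigr do rewrite Exp2E.
by rewrite Exp2E -Exp1_sum; apply: eq_Exp1 => L; apply: Exp1_sum.
Qed.

Lemma Exp2_mul_indep E O a g :
  (forall Lh, a Lh = a (Lh :\: O)) -> (forall L Lh, g L Lh = g L (Lh :&: O)) ->
  Exp2 E p (fun L Lh => a Lh * g L Lh) = Exp1 E p a * Exp2 E p g.
Proof.
move=> aO gO; rewrite !Exp2E -Exp1_scale.
by apply: eq_Exp1 => L; apply: Exp1_mul_indep.
Qed.

Lemma ler_Exp2 E f g :
  (forall u v, (u, v) \in E -> 0 <= p u v <= 1) ->
  (forall L Lh, f L Lh <= g L Lh) -> Exp2 E p f <= Exp2 E p g.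
Proof.
move=> hp fg; apply: ler_sum => L _; apply: ler_sum => Lh _.
by apply: ler_wpM2l; rewrite ?mulr_ge0 ?prL_ge0.
Qed.

End Expectation.

Lemma sigmaL_L2_setU_ler (R : realFieldType) n (E L Lh : edgeset n)
    (T S : {set 'I_n}) :
  (sigmaL (L2 E L Lh (T :|: S)) (T :|: S))%:R <=
  (sigmaL (L2 E L Lh S) S)%:R +
  \sum_(v in ~: S) (v \in T)%:R *
    ((sigmaL (L2 E L Lh [set v]) (v |: S))%:R - (sigmaL L S)%:R) :> R.
Proof.
pose D v := (sigmaL (L2 E L Lh [set v]) (v |: S) - sigmaL L S)%N.
have DE v : (sigmaL (L2 E L Lh [set v]) (v |: S))%:R - (sigmaL L S)%:R = (D v)%:R :> R.
  by rewrite natrB //; apply/subset_leq_card/reachS; [apply: sub_L2 | apply: subsetUr].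
under eq_bigr do rewrite DE.
rewrite (big_setID T) /= [X in _ + (_ + X)]big1 => [|v /setDP[_ /negbTE->]]; last first.
  by rewrite mul0r.
rewrite addr0 setIC -setDE.
under eq_bigr => v /setDP[vT _] do rewrite vT mul1r.
by rewrite -natr_sum -natrD ler_nat sigmaL_L2_setU_le.
Qed.

Lemma xsel_mul_Delta2 (R : realFieldType) n (E : edgeset n) (p : 'I_n -> 'I_n -> R)
    (pi : policy n) (S : {set 'I_n}) (v : 'I_n) :
  xsel E p pi v * Delta2 E p S v =
  Exp2 E p (fun L Lh => (v \in dom (Psi pi Lh))%:R *
    ((sigmaL (L2 E L Lh [set v]) (v |: S))%:R - (sigmaL L S)%:R)).
Proof.
pose O := [set e : 'I_n * 'I_n | e.1 \in [set v]].
rewrite (@Exp2_mul_indep _ _ _ _ O) // => [Lh | L Lh]; last by rewrite L2_setI_out.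
rewrite (@mem_dom_Psi_agree _ pi Lh (Lh :\: O)) // => u z uv.
by rewrite !inE /= (negbTE uv).
Qed.

Theorem lemma10 (R : realFieldType) (n : nat) (E : edgeset n)
  (p : 'I_n -> 'I_n -> R)
  (hp : forall u v, (u, v) \in E -> 0 <= p u v <= 1)
  (k : nat) (hk : (2 <= k <= n)%N)
  (pi : policy n) (hsize : has_size E pi k)
  (hopt : forall pi' : policy n, has_size E pi' k ->
            sigma_pol E p pi' <= sigma_pol E p pi)
  (S : {set 'I_n}) :
  Exp2 E p (fun L Lh =>
    (sigmaL (L2 E L Lh (dom (Psi pi Lh) :|: S)) (dom (Psi pi Lh) :|: S))%:R)
  <= sigma2 E p S + \sum_(v in ~: S) xsel E p pi v * Delta2 E p S v.
Proof.
apply: le_trans (ler_Exp2 hp (fun L Lh =>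
  sigmaL_L2_setU_ler R E L Lh (dom (Psi pi Lh)) S)) _.
rewrite Exp2D Exp2_sum lerD2l.
by under [X in _ <= X]eq_bigr do rewrite xsel_mul_Delta2.
Qed.
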